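(* Let $p,q,s,u,v,w,t$ be parameters and let $(a_n)_{n\ge0}$ be defined by $a_0=1$, $a_1=p$, $a_2=q$, $a_3=s$ and, for $n\ge4$, $$a_n=u\,a_{n-1}+v\,a_{n-2}+w\,a_{n-3}+t\sum_{k=1}^{n-4}a_ka_{n-k-3}.$$ Let $N(x)=1+(p-u)x-(v+pu-q)x^2-(w-s-t+qu+pv)x^3$ and $D(x)=1-ux-vx^2-(w-2t)x^3$. Then the generating function $\sum_{n\ge0}a_nx^n$ equals $$\left(\frac{N(x)}{D(x)},\ \frac{tx^3N(x)}{D(x)^2}\right)\cdot c(x)=\frac{N(x)}{D(x)}\,c\!\left(\frac{tx^3N(x)}{D(x)^2}\right).$$
   Context: $c(x)=\frac{1-\sqrt{1-4x}}{2x}$ is the generating function of the Catalan numbers. For power series $g(x)$ with $g(0)\neq0$ and $f(x)$ with $f(0)=0$, the Riordan array $(g,f)$ acts on a power series $h(x)$ by $(g,f)\cdot h(x)=g(x)h(f(x))$. *)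

From HB Require Import structures.
From mathcomp Require Import all_boot all_order all_algebra.
Set Implicit Arguments. Unset Strict Implicit. Unset Printing Implicit Defensive.
Import Order.TTheory GRing.Theory Num.Theory.
Local Open Scope ring_scope.

Definition fps (R : Type) := nat -> R.

Section FPS.
Variable R : comRingType.

Definition fps_mul (f g : fps R) : fps R :=
  fun n => \sum_(i < n.+1) f i * g (n - i)%N.

Definition fps_one : fps R := fun n => if n == 0%N then 1 else 0.

Fixpoint fps_pow (f : fps R) (k : nat) : fps R :=
  if k is k'.+1 then fps_mul f (fps_pow f k') else fps_one.

(* Composition h(f(x)), meaningful when f 0 = 0 (then f^k has order >= k,
   so only k <= n contribute to the n-th coefficient). *)
Definition fps_comp (h f : fps R) : fps R :=
  fun n => \sum_(k < n.+1) h k * fps_pow f k n.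

(* Multiplicative inverse of a series with constant term 1:
   1/f = sum_k (1 - f)^k. *)
Definition fps_inv1 (f : fps R) : fps R :=
  fps_comp (fun _ => 1) (fun n => fps_one n - f n).

Definition poly_fps (P : {poly R}) : fps R := fun n => P`_n.

Definition riordan_act (g f h : fps R) : fps R := fps_mul g (fps_comp h f).
End FPS.

Definition catalan (n : nat) : nat := 'C(n.*2, n) %/ n.+1.

(* c(x) = (1 - sqrt(1-4x))/(2x) = sum_n C_n x^n *)
Definition catalan_gf (R : comRingType) : fps R := fun n => (catalan n)%:R.

From mathcomp Require Import all_boot all_order all_algebra.
From mathcomp Require Import zify ring.
Import GRing.Theory.

(* Both sides are power series solutions [Y] of [D Y = N + t x^3 Y^2] with
   constant term 1, and such a solution is unique: two solutions [X], [Y]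
   satisfy [(X - Y) (D - t x^3 (X + Y)) = 0], and the second factor is
   invertible.  For the sequence this equation is the recurrence itself, the
   extra [2 t] in [D] accounting for the two terms [a_0 a_(n-3)] and
   [a_(n-3) a_0] of the full convolution that the recurrence omits.  For the
   Riordan image it follows from [c = 1 + x c^2] with [x := t x^3 N / D^2].
   Everything is checked coefficientwise, on polynomial truncations modulo
   [x^m]. *)

Lemma catalan_mul_succ n : catalan n * n.+1 = 'C(n.*2, n).
Proof.
have succ_dvd : n.+1 %| 'C(n.*2, n).
  apply/dvdnP; exists ('C(n.*2, n) - 'C(n.*2, n.+1)).
  have := mul_bin_left n.*2 n; have -> : (n.*2 - n = n)%N by lia.
  nia.
by rewrite /catalan divnK.
Qed.

Lemma mul_bin_center n : n.+1 * 'C((n.+1).*2, n.+1) = (4 * n + 2) * 'C(n.*2, n).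
Proof.
have := mul_bin_diag (n.+1).*2 n; have := mul_bin_down (n.*2).+1 n.
have -> : ((n.+1).*2.-1 = (n.*2).+1)%N by lia.
have -> : ((n.*2).+1 - n = n.+1)%N by lia.
rewrite /=; nia.
Qed.

Lemma catalan_succ n : catalan n.+1 * n.+2 = catalan n * (4 * n + 2).
Proof.
apply/eqP; rewrite -(eqn_pmul2l (ltn0Sn n)); apply/eqP.
have := catalan_mul_succ n.+1; have := catalan_mul_succ n; have := mul_bin_center n.
nia.
Qed.

Definition catalan_conv n := \sum_(i < n.+1) catalan i * catalan (n - i).

Lemma catalan_conv_weighted n :
  2 * \sum_(i < n.+1) i * (catalan i * catalan (n - i)) = n * catalan_conv n.
Proof.
have reflect_sum : \sum_(i < n.+1) i * (catalan i * catalan (n - i))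
    = \sum_(i < n.+1) (n - i) * (catalan i * catalan (n - i)).
  rewrite (reindex_inj rev_ord_inj) /=; apply: eq_bigr => i _.
  have ltin := ltn_ord i; rewrite subSS subKn //; lia.
rewrite mul2n -addnn {2}reflect_sum -big_split big_distrr /=.
by apply: eq_bigr => i _; rewrite -mulnDl subnKC // -ltnS.
Qed.

(* Both sides equal [2 * \sum_(i < n.+2) i.+1 * (catalan i * catalan (n.+1 - i))]:
   the left one by symmetry, the right one by [catalan_succ]. *)
Lemma catalan_conv_succ n :
  n.+3 * catalan_conv n.+1 = 2 * catalan n.+1 + 4 * n.+1 * catalan_conv n.
Proof.
have shifted : \sum_(i < n.+2) i.+1 * (catalan i * catalan (n.+1 - i))
    = catalan n.+1 + \sum_(i < n.+1) (4 * i + 2) * (catalan i * catalan (n - i)).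
  rewrite big_ord_recl /= subn0; congr (_ + _).
    by rewrite mul1n (_ : catalan 0 = 1) // mul1n.
  apply: eq_bigr => i _; rewrite /bump /= add1n subSS mulnA [i.+2 * _]mulnC.
  by rewrite catalan_succ [catalan i * _]mulnC mulnA.
have split_succ : \sum_(i < n.+2) i.+1 * (catalan i * catalan (n.+1 - i))
    = \sum_(i < n.+2) i * (catalan i * catalan (n.+1 - i)) + catalan_conv n.+1.
  by rewrite -big_split; apply: eq_bigr => i _; rewrite mulSn addnC.
have split_affine : \sum_(i < n.+1) (4 * i + 2) * (catalan i * catalan (n - i))
    = 4 * \sum_(i < n.+1) i * (catalan i * catalan (n - i)) + 2 * catalan_conv n.
  rewrite !big_distrr -big_split; apply: eq_bigr => i _.
  by rewrite mulnDl -[4 * i * _]mulnA.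
have := catalan_conv_weighted n.+1; have := catalan_conv_weighted n.
lia.
Qed.

Lemma catalan_succ_conv n : catalan n.+1 = catalan_conv n.
Proof.
elim: n => [|n IHn]; first by rewrite /catalan_conv big_ord1.
apply/eqP; rewrite -(eqn_pmul2l (ltn0Sn n.+2)) catalan_conv_succ -IHn.
by rewrite mulnC catalan_succ; apply/eqP; lia.
Qed.

Local Open Scope ring_scope.

Section TruncatedSeries.
Set Implicit Arguments. Unset Strict Implicit.
Variable R : comNzRingType.
Implicit Types (P Q F : {poly R}) (f g h : fps R).

Definition dvdXn m P := exists Q, P = 'X^m * Q.

Lemma dvdXnP m P : dvdXn m P <-> forall i, (i < m)%N -> P`_i = 0.
Proof.
split=> [[Q ->] i lt_im | P_low]; first by rewrite coefXnM lt_im.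
exists (drop_poly m P); rewrite -{1}(poly_take_drop m P) mulrC.
suff -> : take_poly m P = 0 by rewrite add0r.
by apply/polyP => i; rewrite coef_take_poly coef0; case: ifP => // /P_low.
Qed.

Lemma dvdX_coef0 P : P`_0 = 0 -> dvdXn 1 P.
Proof. by move=> P0; apply/dvdXnP => -[]. Qed.

Lemma dvdXnD m P Q : dvdXn m P -> dvdXn m Q -> dvdXn m (P + Q).
Proof. by move=> [A ->] [B ->]; exists (A + B); rewrite mulrDr. Qed.

Lemma dvdXnN m P : dvdXn m P -> dvdXn m (- P).
Proof. by move=> [A ->]; exists (- A); rewrite mulrN. Qed.

Lemma dvdXnB m P Q : dvdXn m P -> dvdXn m Q -> dvdXn m (P - Q).
Proof. by move=> dP dQ; apply/dvdXnD/dvdXnN. Qed.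

Lemma dvdXnMl m P Q : dvdXn m P -> dvdXn m (Q * P).
Proof. by move=> [A ->]; exists (Q * A); rewrite mulrCA. Qed.

Lemma dvdXnMr m P Q : dvdXn m P -> dvdXn m (P * Q).
Proof. by rewrite mulrC; apply: dvdXnMl. Qed.

Lemma dvdXnM m n P Q : dvdXn m P -> dvdXn n Q -> dvdXn (m + n) (P * Q).
Proof. by move=> [A ->] [B ->]; exists (A * B); rewrite exprD; ring. Qed.

Lemma dvdXnX k P : dvdXn 1 P -> dvdXn k (P ^+ k).
Proof.
move=> dP; elim: k => [|k IHk]; first by exists 1; rewrite !expr0 mulr1.
by rewrite exprS -add1n; apply: dvdXnM.
Qed.

Lemma dvdXn_comp m P F : dvdXn m P -> dvdXn 1 F -> dvdXn m (P \Po F).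
Proof.
move=> [A ->] dF; rewrite comp_polyM rmorphXn /= comp_polyX.
exact/dvdXnMr/dvdXnX.
Qed.

Definition inv_trunc m P := \sum_(k < m) (1 - P) ^+ k.

(* Geometric series: [P * inv_trunc m P = 1 - (1 - P) ^+ m]. *)
Lemma dvdXn_mul_inv_trunc m P : P`_0 = 1 -> dvdXn m (P * inv_trunc m P - 1).
Proof.
move=> P0; have geom := subrX1 (1 - P) m.
have -> : P * inv_trunc m P - 1 = - (1 - P) ^+ m.
  transitivity (- ((1 - P - 1) * inv_trunc m P) - 1); first by ring.
  by rewrite -geom; ring.
apply/dvdXnN/dvdXnX/dvdX_coef0.
by rewrite coefB coef1 P0 subrr.
Qed.

Definition agree m f P := forall i, (i < m)%N -> f i = P`_i.

Lemma agree_poly m P : agree m (poly_fps P) P.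
Proof. by []. Qed.

Lemma agree_one m : agree m (fps_one R) 1.
Proof. by move=> [|i] _; rewrite /fps_one coef1. Qed.

Lemma agree_mul m f g P Q :
  agree m f P -> agree m g Q -> agree m (fps_mul f g) (P * Q).
Proof.
move=> fP gQ i lt_im; rewrite /fps_mul coefM; apply: eq_bigr => j _.
have le_ji : (j <= i)%N by rewrite -ltnS.
by rewrite fP ?gQ //; lia.
Qed.

Lemma agree_pow m f P k : agree m f P -> agree m (fps_pow f k) (P ^+ k).
Proof.
move=> fP; elim: k => [|k IHk] /=; first exact: agree_one.
by rewrite exprS; apply: agree_mul.
Qed.

(* As [P`_0 = 0], the powers [P ^+ k] with [m <= k] vanish below degree [m]. *)
Lemma agree_comp m h f P : agree m f P -> P`_0 = 0 ->
  agree m (fps_comp h f) (\sum_(k < m) h k *: P ^+ k).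
Proof.
move=> fP P0 i lt_im; rewrite /fps_comp coef_sum.
rewrite (big_ord_widen m (fun k => h k * fps_pow f k i)) // big_mkcond /=.
apply: eq_bigr => k _; rewrite coefZ; case: ifP => le_ki.
  by rewrite (agree_pow k fP).
have /dvdXnP -> // := dvdXnX k (dvdX_coef0 P0); first by rewrite mulr0.
by rewrite ltnNge -ltnS le_ki.
Qed.

Lemma agree_inv1 m f P : agree m f P -> P`_0 = 1 ->
  agree m (fps_inv1 f) (inv_trunc m P).
Proof.
move=> fP P0 i lt_im; rewrite /fps_inv1 /inv_trunc.
rewrite (@agree_comp m _ _ (1 - P)) //; last by rewrite coefB coef1 P0 subrr.
- by under eq_bigr do rewrite scale1r.
- by move=> j lt_jm; rewrite coefB -fP // -(agree_one lt_jm).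
Qed.

Lemma agree_riordan_act m g f h G F :
  agree m g G -> agree m f F -> F`_0 = 0 ->
  agree m (riordan_act g f h) (G * \sum_(k < m) h k *: F ^+ k).
Proof. by move=> gG fF F0; apply/agree_mul/agree_comp. Qed.

End TruncatedSeries.

Section QuadraticCongruence.
Set Implicit Arguments. Unset Strict Implicit.
Variable R : comNzRingType.
Implicit Types (D N T F X Y : {poly R}).

Definition solves_quadratic m D N T Y := dvdXn m (D * Y - N - T * Y ^+ 2).

(* [(X - Y) * (D - T * (X + Y))] is the difference of the two residues, and
   [D - T * (X + Y)] is invertible modulo ['X^m]. *)
Lemma solves_quadratic_unique m D N T X Y : D`_0 = 1 -> T`_0 = 0 ->
  solves_quadratic m D N T X -> solves_quadratic m D N T Y -> dvdXn m (X - Y).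
Proof.
move=> D0 T0 solX solY; set Z := D - T * (X + Y).
have Z0 : Z`_0 = 1 by rewrite coefB coef0M T0 mul0r subr0.
have -> : X - Y = ((D * X - N - T * X ^+ 2) - (D * Y - N - T * Y ^+ 2))
   * inv_trunc m Z - (X - Y) * (Z * inv_trunc m Z - 1) by rewrite /Z; ring.
by apply/dvdXnB; [apply/dvdXnMr/dvdXnB | apply/dvdXnMl/dvdXn_mul_inv_trunc].
Qed.

Lemma catalan_poly_solves_quadratic m :
  solves_quadratic m 1 1 'X (\poly_(k < m) (catalan k)%:R).
Proof.
apply/dvdXnP => i lt_im; rewrite mul1r !coefB coefXM coef1 coef_poly lt_im.
case: i lt_im => [|i] lt_im /=; first by rewrite subrr subr0.
rewrite subr0 expr2 coefM catalan_succ_conv /catalan_conv natr_sum.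
apply/eqP; rewrite subr_eq0; apply/eqP; apply: eq_bigr => j _.
have le_ji : (j <= i)%N by rewrite -ltnS.
by rewrite !coef_poly !ifT ?natrM //; lia.
Qed.

Lemma catalan_solves_quadratic m F : F`_0 = 0 ->
  solves_quadratic m 1 1 F (\sum_(k < m) (catalan k)%:R *: F ^+ k).
Proof.
move=> F0; rewrite /solves_quadratic mul1r.
have <- : \poly_(k < m) (catalan k)%:R \Po F = \sum_(k < m) (catalan k)%:R *: F ^+ k.
  rewrite poly_def linear_sum; apply: eq_bigr => k _.
  by rewrite linearZ /= rmorphXn /= comp_polyX.
have := dvdXn_comp (catalan_poly_solves_quadratic m) (dvdX_coef0 F0).
by rewrite mul1r !rmorphB rmorph1 rmorphM rmorphXn /= comp_polyX.
Qed.

Lemma riordan_solves_quadratic m D N T Di D2i C :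
  dvdXn m (D * Di - 1) -> dvdXn m (D ^+ 2 * D2i - 1) ->
  solves_quadratic m 1 1 (T * N * D2i) C ->
  solves_quadratic m D N T (N * Di * C).
Proof.
rewrite /solves_quadratic; set e1 := D * Di - 1; set e2 := D ^+ 2 * D2i - 1.
set e3 := 1 * C - 1 - _; move=> de1 de2 de3.
pose d := Di ^+ 2 - D2i.
(* [Di ^+ 2] and [D2i] both invert [D ^+ 2] modulo ['X^m]. *)
have dd : dvdXn m d.
  have -> : d = D2i * (e1 * (2%:R + e1) - e2) - e2 * d by rewrite /d /e1 /e2; ring.
  by apply/dvdXnB/dvdXnMr => //; apply/dvdXnMl/dvdXnB => //; apply: dvdXnMr.
have -> : D * (N * Di * C) - N - T * (N * Di * C) ^+ 2
   = N * e3 + N * C * e1 - T * N ^+ 2 * C ^+ 2 * d by rewrite /e1 /e3 /d; ring.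
by apply/dvdXnB; [apply/dvdXnD; apply: dvdXnMl | apply: dvdXnMl].
Qed.

End QuadraticCongruence.

Section Recurrence.
Set Implicit Arguments. Unset Strict Implicit.
Variables (R : comNzRingType) (p q s u v w t : R) (a : nat -> R).
Hypotheses (a0E : a 0%N = 1) (a1E : a 1%N = p) (a2E : a 2%N = q) (a3E : a 3%N = s).
Hypothesis a_rec : forall n : nat, (4 <= n)%N ->
  a n = u * a n.-1 + v * a (n - 2)%N + w * a (n - 3)%N
        + t * \sum_(1 <= k < n - 3) a k * a (n - k - 3)%N.

Let N : {poly R} := Poly [:: 1; p - u; - (v + p * u - q); - (w - s - t + q * u + p * v)].
Let D : {poly R} := Poly [:: 1; - u; - v; - (w - 2%:R * t)].

Lemma conv_split_ends k : \sum_(j < k.+2) a j * a (k.+1 - j)%N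
  = 2%:R * a k.+1 + \sum_(1 <= j < k.+1) a j * a (k.+1 - j)%N.
Proof.
rewrite big_ord_recl big_ord_recr /= subn0 subnn a0E mul1r mulr1 big_add1 big_mkord.
by rewrite mulr2n mulrDl mul1r -addrA addrC.
Qed.

Lemma recurrence_solves_quadratic m :
  solves_quadratic m D N (t *: 'X^3) (\poly_(i < m) a i).
Proof.
have D_monomials : D = 1 - 'X * u%:P - 'X^2 * v%:P - 'X^3 * (w - 2%:R * t)%:P.
  apply/polyP => i; rewrite coef_Poly !coefB coef1 coefXM !coefXnM !coefC.
  by case: i => [|[|[|[|i]]]] /=; rewrite ?subr0 ?sub0r ?nth_nil.
apply/dvdXnP => i lt_im; set A := \poly_(i < m) a i.
have coefA j : (j <= i)%N -> A`_j = a j.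
  by move=> le_ji; rewrite coef_poly ifT //; lia.
rewrite D_monomials !mulrBl mul1r -!mulrA -scalerAl.
rewrite !coefB !coefXM !coefCM coefZ coefXnM coef_Poly expr2 coefM.
case: i lt_im coefA => [|[|[|[|k]]]] lt_im coefA /=.
- by rewrite coefA // a0E; ring.
- by rewrite !coefA // a0E a1E; ring.
- by rewrite !coefA // a0E a1E a2E; ring.
- by rewrite big_ord1 !coefA // a0E a1E a2E a3E; ring.
- have sqrA : \sum_(j < k.+2) A`_j * A`_(k.+1 - j) = \sum_(j < k.+2) a j * a (k.+1 - j)%N.
    by apply: eq_bigr => j _; have ltj := ltn_ord j; rewrite !coefA //; lia.
  rewrite nth_nil subr0 (_ : k.+4 - 3 = k.+1)%N // sqrA conv_split_ends.
  rewrite !coefA; [|lia..].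
  rewrite (a_rec (isT : 4 <= k.+4)%N) /= (_ : k.+4 - 2 = k.+2)%N // (_ : k.+4 - 3 = k.+1)%N //.
  have -> : \sum_(1 <= j < k.+1) a j * a (k.+4 - j - 3)%N
          = \sum_(1 <= j < k.+1) a j * a (k.+1 - j)%N.
    by apply: eq_bigr => j _; congr (_ * a _); lia.
  ring.
Qed.
End Recurrence.

Theorem mainTheorem7 (R : comRingType) (p q s u v w t : R) (a : nat -> R) :
  a 0%N = 1 -> a 1%N = p -> a 2%N = q -> a 3%N = s ->
  (forall n : nat, (4 <= n)%N ->
     a n = u * a n.-1 + v * a (n - 2)%N + w * a (n - 3)%N
           + t * \sum_(1 <= k < n - 3) a k * a (n - k - 3)%N) ->
  let N : {poly R} := Poly [:: 1; p - u; - (v + p * u - q);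
                              - (w - s - t + q * u + p * v)] in
  let D : {poly R} := Poly [:: 1; - u; - v; - (w - 2%:R * t)] in
  let g : fps R := fps_mul (poly_fps N) (fps_inv1 (poly_fps D)) in
  let f : fps R := fps_mul (poly_fps (t *: 'X^3 * N))
                           (fps_inv1 (poly_fps (D ^+ 2))) in
  forall n : nat, a n = riordan_act g f (catalan_gf R) n.
Proof.
move=> a0E a1E a2E a3E a_rec N D g f n; set m := n.+1.
have D0 : D`_0 = 1 by rewrite coef_Poly.
have D20 : (D ^+ 2)`_0 = 1 by rewrite expr2 coef0M D0 mulr1.
have T0 : (t *: 'X^3 : {poly R})`_0 = 0 by rewrite coefZ coefXn mulr0.
set F := t *: 'X^3 * N * inv_trunc m (D ^+ 2).
have F0 : F`_0 = 0 by rewrite !coef0M T0 !mul0r.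
set C := \sum_(k < m) (catalan k)%:R *: F ^+ k.
have : dvdXn m (\poly_(i < m) a i - N * inv_trunc m D * C).
  apply: (solves_quadratic_unique D0 T0).
    exact: (recurrence_solves_quadratic a0E a1E a2E a3E a_rec).
  apply: riordan_solves_quadratic; try exact: dvdXn_mul_inv_trunc.
  exact: catalan_solves_quadratic.
move/dvdXnP/(_ n (ltnSn n))/eqP; rewrite coefB coef_poly ltnSn subr_eq0 => /eqP ->.
have agree_g : agree m g (N * inv_trunc m D).
  by apply: agree_mul => //; exact: agree_inv1.
have agree_f : agree m f F by apply: agree_mul => //; exact: agree_inv1.
by rewrite (agree_riordan_act _ agree_g agree_f F0).
Qed.
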